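(* Let $p$ be an odd prime, $n$ a positive integer, $q=p^n$ with $q\equiv1\pmod4$, let $\xi\in\mathbb F_{q^2}\setminus\mathbb F_q$, write $x=x_0+x_1\xi$ ($x_0,x_1\in\mathbb F_q$), and let $\alpha$ be a nonsquare in $\mathbb F_q$. Let $f$ be either $f(x)=(x_0^2+\alpha x_1^{2p^i})+2x_0x_1\xi$ with $0<i<n$, or $f(x)=(x_0^{p^k+1}+\alpha x_1^{p^{k+i}+p^i})+2x_0x_1\xi$ with $0<i,k<n$ and $n/\gcd(k,n)$ odd, and let $\mathcal U_\xi:=\{(x,t\xi):x\in\mathbb F_{q^2},t\in\mathbb F_q\}\cup\{(\infty)\}$, which is a unital in $\Pi(f)$. If there is $\omega\in\mathbb F_q$ with $\omega^2-\omega+1=0$, then $\mathcal U_\xi$ contains an O'Nan configuration.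
   Context: For a planar function $f$ on $\mathbb F_{q^2}$ (i.e.\ $x\mapsto f(x+a)-f(x)$ is bijective for each $a\neq0$; both functions above are planar), $\Pi(f)$ is the projective plane with points $(x,y)\in\mathbb F_{q^2}^2$ and $(a)$ for $a\in\mathbb F_{q^2}\cup\{\infty\}$, lines $L_{a,b}=\{(x,f(x+a)-b):x\in\mathbb F_{q^2}\}\cup\{(a)\}$, $N_a=\{(a,y):y\in\mathbb F_{q^2}\}\cup\{(\infty)\}$ ($a,b\in\mathbb F_{q^2}$), $L_\infty=\{(a):a\in\mathbb F_{q^2}\cup\{\infty\}\}$. A unital is a set of $q^3+1$ points meeting every line in $1$ or $q+1$ points, regarded as a design whose blocks are its intersections with lines meeting it in $q+1$ points. An O'Nan configuration consists of four blocks, any two of which meet, such that the six pairwise intersection points are distinct. *)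

From mathcomp Require Import all_boot all_order all_algebra.
Set Implicit Arguments. Unset Strict Implicit. Unset Printing Implicit Defensive.
Import GRing.Theory.
Local Open Scope ring_scope.

(* Points of Pi(f) over L = F_{q^2}:
   inl (x, y)      = affine point (x, y)
   inr (Some a)    = point (a) at infinity, a in L
   inr None        = point (infinity). *)
Definition point (L : finFieldType) : finType := ((L * L) + option L)%type.

(* Line indices: inl (inl (a, b)) = L_{a,b};  inl (inr a) = N_a;  inr tt = L_infinity *)
Definition line_idx (L : finFieldType) : finType := ((L * L) + L + unit)%type.

Definition line_set (L : finFieldType) (f : L -> L) (l : line_idx L) : {set point L} :=
  match l with
  | inl (inl (a, b)) =>
      [set P : point L | match P with
                         | inl (x, y) => y == f (x + a) - b
                         | inr o => o == Some a
                         end]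
  | inl (inr a) =>
      [set P : point L | match P with
                         | inl (x, _) => x == a
                         | inr o => o == None
                         end]
  | inr _ => [set P : point L | match P with inl _ => false | inr _ => true end]
  end.

Definition inFq (L : finFieldType) (q : nat) (t : L) : bool := t ^+ q == t.

Definition U_xi (L : finFieldType) (q : nat) (xi : L) : {set point L} :=
  [set P : point L | match P with
                     | inl (x, y) => [exists t : L, inFq q t && (y == t * xi)]
                     | inr o => o == None
                     end].

Definition is_block (L : finFieldType) (f : L -> L) (q : nat) (U B : {set point L}) : Prop :=
  exists l : line_idx L, B = U :&: line_set f l /\ #|B| = q.+1.

Definition has_ONan (L : finFieldType) (f : L -> L) (q : nat) (U : {set point L}) : Prop :=
  exists (B1 B2 B3 B4 : {set point L}) (P12 P13 P14 P23 P24 P34 : point L),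
    [/\ is_block f q U B1, is_block f q U B2, is_block f q U B3 & is_block f q U B4] /\
    [/\ B1 :&: B2 = [set P12], B1 :&: B3 = [set P13] & B1 :&: B4 = [set P14]] /\
    [/\ B2 :&: B3 = [set P23], B2 :&: B4 = [set P24] & B3 :&: B4 = [set P34]] /\
    uniq [:: P12; P13; P14; P23; P24; P34].

(* For a line L_{a,b} with b = b0 + b1 xi and
   b0 <> 0, the point (x, f (x + a) - b) lies in U_xi exactly when the F_q-part
   x0 ^ (p^k + 1) + alpha x1 ^ (p^(k+i) + p^i) of f (x + a) equals b0, where x + a = x0 + x1 xi.
   With delta ^ 2 = - alpha, this F_q-part is the norm w ^ (q + 1) of
   w = x0 ^ ((p^k + 1)/2) + (x1 ^ p^i) ^ ((p^k + 1)/2) delta, and x |-> w is injective because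
   (p^k + 1)/2 is odd and t ^ p^k = - t has no nonzero solution in F_q when n / gcd(k, n) is
   odd.  Every nonzero norm has q + 1 preimages, so the line is a block.
   The four blocks L_{s0 + s1 xi, 1 + alpha - 2 s0 s1 xi}, s0, s1 = +-1, meet pairwise in
   (0, +-4 xi), (+-2, 0) and (+-2 xi, 0): comparing F_q- and xi-parts reduces each intersection
   to (y + 1) ^ e = (y - 1) ^ e over F_q, or, for opposite signs, to
   (y + 1) ^ e1 - (y - 1) ^ e1 = alpha ((y + 1) ^ e2 - (y - 1) ^ e2), and the same fact about
   t ^ p^k = - t (with alpha a nonsquare) forces y = 0.  The first family of f is the case k = 0
   of the second, and the cube root of unity omega is not needed. *)

From mathcomp Require Import all_boot all_algebra all_field.
From mathcomp Require Import ring zify.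
Import GRing.Theory.
Set Implicit Arguments. Unset Strict Implicit. Unset Printing Implicit Defensive.
Local Open Scope ring_scope.

Lemma expr_sign_even (R : comPzRingType) (s y : R) e : s ^+ 2 = 1 -> ~~ odd e ->
  (s * y) ^+ e = y ^+ e.
Proof.
move=> s2 e_even; rewrite exprMn -(odd_double_half e) (negbTE e_even) add0n.
by rewrite -muln2 mulnC exprM s2 expr1n mul1r.
Qed.

Lemma exprD_sign (R : comPzRingType) (s z : R) e : s ^+ 2 = 1 -> ~~ odd e ->
  (z + s) ^+ e = (s * z + 1) ^+ e.
Proof.
move=> s2 e_even; rewrite -[in RHS](expr_sign_even _ s2 e_even) mulrDr mulrA -expr2 s2.
by rewrite mul1r mulr1.
Qed.

Lemma exprB_sign (R : comPzRingType) (s z : R) e : s ^+ 2 = 1 -> ~~ odd e ->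
  (z - s) ^+ e = (s * z - 1) ^+ e.
Proof.
move=> s2 e_even; rewrite -[in RHS](expr_sign_even _ s2 e_even) mulrBr mulrA -expr2 s2.
by rewrite mul1r mulr1.
Qed.

Lemma sign_neq0 (R : nzRingType) (s : R) : s ^+ 2 = 1 -> s != 0.
Proof. by move=> s2; apply: contra_eq_neq s2 => ->; rewrite expr0n eq_sym oner_neq0. Qed.

Lemma eq0_of_scaled (R : idomainType) (c z l r : R) : c != 0 -> l = r -> c * z = l - r -> z = 0.
Proof. by move=> c0 -> /eqP; rewrite subrr mulf_eq0 (negbTE c0) => /eqP. Qed.

Section Frobenius.

Variables (R : idomainType) (p : nat).
Hypotheses (p_prime : prime p) (p_odd : odd p) (charR : p \in [pchar R]).

Lemma pchar_nat_expn m : [pchar R].-nat (p ^ m)%N.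
Proof. by rewrite (eq_pnat _ (pcharf_eq charR)) pnatX pnat_id. Qed.

Lemma exprpXD m (x y : R) : (x + y) ^+ (p ^ m) = x ^+ (p ^ m) + y ^+ (p ^ m).
Proof. exact/exprDn_pchar/pchar_nat_expn. Qed.

Lemma exprpXN m (x : R) : (- x) ^+ (p ^ m) = - x ^+ (p ^ m).
Proof. exact/exprNn_pchar/pchar_nat_expn. Qed.

Lemma exprpXB m (x y : R) : (x - y) ^+ (p ^ m) = x ^+ (p ^ m) - y ^+ (p ^ m).
Proof. by rewrite exprpXD exprpXN. Qed.

Lemma exprpX_inj m : injective (fun x : R => x ^+ (p ^ m)).
Proof.
by move=> x y /= /eqP; rewrite -subr_eq0 -exprpXB expf_eq0 subr_eq0 => /andP[_ /eqP].
Qed.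

Lemma two_neq0 : (2%:R : R) != 0.
Proof.
rewrite -(dvdn_pcharf charR) dvdn_prime2 //.
by apply: contraTN p_odd => /eqP ->.
Qed.

End Frobenius.

(* Frobenius [x |-> x ^+ q] fixes F_q, so [x = x0 + x1 th] gives [x - x ^+ q = x1 (th - th ^+ q)]. *)
Definition coord_im (L : finFieldType) (q : nat) (th x : L) := (x - x ^+ q) / (th - th ^+ q).
Definition coord_re (L : finFieldType) (q : nat) (th x : L) := x - coord_im q th x * th.

Lemma card_rootsXn_le (L : finFieldType) m (c : L) :
  (0 < m)%N -> (#|[set x : L | x ^+ m == c]| <= m)%N.
Proof.
move=> m_gt0; have nz : ('X^m - c%:P : {poly L}) != 0 by rewrite -size_poly_eq0 size_XnsubC.
rewrite -ltnS -(size_XnsubC c m_gt0) cardE max_poly_roots ?enum_uniq //.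
by apply/allP => x; rewrite mem_enum inE rootE !hornerE subr_eq0.
Qed.

Section Subfield.

Variables (L : finFieldType) (p n : nat).
Hypotheses (p_prime : prime p) (p_odd : odd p) (charL : p \in [pchar L]).
Hypotheses (n_gt0 : (0 < n)%N) (cardL : #|L| = ((p ^ n) ^ 2)%N).

Local Notation q := (p ^ n)%N.
Local Notation inFq := (inFq q).

Lemma inFq0 : inFq (0 : L).
Proof. by rewrite /inFq expr0n eqn0Ngt expn_gt0 prime_gt0. Qed.

Lemma inFq1 : inFq (1 : L).
Proof. by rewrite /inFq expr1n. Qed.

Lemma inFqD (x y : L) : inFq x -> inFq y -> inFq (x + y).
Proof. by move=> /eqP hx /eqP hy; rewrite /inFq exprpXD // hx hy. Qed.

Lemma inFqN (x : L) : inFq x -> inFq (- x).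
Proof. by move=> /eqP hx; rewrite /inFq exprpXN // hx. Qed.

Lemma inFqB (x y : L) : inFq x -> inFq y -> inFq (x - y).
Proof. by move=> hx hy; rewrite inFqD ?inFqN. Qed.

Lemma inFqM (x y : L) : inFq x -> inFq y -> inFq (x * y).
Proof. by move=> /eqP hx /eqP hy; rewrite /inFq exprMn hx hy. Qed.

Lemma inFqV (x : L) : inFq x -> inFq x^-1.
Proof. by move=> /eqP hx; rewrite /inFq exprVn hx. Qed.

Lemma inFqX (x : L) e : inFq x -> inFq (x ^+ e).
Proof. by move=> /eqP hx; rewrite /inFq exprAC hx. Qed.

Lemma inFq_nat m : inFq (m%:R : L).
Proof. by elim: m => [|m IH]; rewrite ?inFq0 // -addn1 natrD inFqD ?inFq1. Qed.

Lemma inFq_exprqX (x : L) m : inFq x -> x ^+ (q ^ m) = x.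
Proof. by move=> /eqP hx; elim: m => [|m IH]; rewrite ?expr1 // expnSr exprM IH hx. Qed.

Lemma exprqK : involutive (fun x : L => x ^+ q).
Proof. by move=> x; rewrite /= -exprM mulnn -cardL expf_card. Qed.

Lemma normq_inFq (w : L) : inFq (w ^+ q.+1).
Proof. by rewrite /inFq exprAC exprS exprqK exprS mulrC. Qed.

Lemma sign_inFq (s : L) : s ^+ 2 = 1 -> inFq s.
Proof. by move/eqP; rewrite sqrf_eq1 => /orP[]/eqP->; [apply: inFq1 | apply/inFqN/inFq1]. Qed.

Lemma normq_coord (d s t : L) : d ^+ q = - d -> inFq s -> inFq t ->
  (s + t * d) ^+ q.+1 = s ^+ 2 - t ^+ 2 * d ^+ 2.
Proof.
move=> dq /eqP sq /eqP tq.
by rewrite exprSr exprpXD // exprMn sq tq dq; ring.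
Qed.

Lemma q_gt1 : (1 < q)%N.
Proof. by rewrite -(expn0 p) ltn_exp2l ?prime_gt1. Qed.

Lemma card_Fq_nonzero_le : (#|[set d : L | inFq d && (d != 0%R)]| <= q.-1)%N.
Proof.
apply: leq_trans (card_rootsXn_le (1 : L) _); last by rewrite -subn1 subn_gt0 q_gt1.
apply/subset_leq_card/subsetP => d; rewrite !inE => /andP[/eqP dq d0].
by rewrite -(inj_eq (mulIf d0)) -exprSr (prednK (ltnW q_gt1)) dq mul1r.
Qed.

Lemma card_normq_fiber (c : L) : inFq c -> c != 0 -> #|[set w : L | w ^+ q.+1 == c]| = q.+1.
Proof.
move=> cq c0; pose fiber d := [set w : L | w ^+ q.+1 == d].
pose S := [set d : L | inFq d && (d != 0)].
have fiber_le d : (#|fiber d| <= q.+1)%N by apply: card_rootsXn_le.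
have units_sum : #|[set~ (0 : L)]| = (\sum_(d in S) #|fiber d|)%N.
  rewrite -sum1_card (partition_big (fun w : L => w ^+ q.+1) (mem S)) /=; last first.
    by move=> w; rewrite !inE => w0; rewrite normq_inFq expf_neq0.
  apply: eq_bigr => d; rewrite inE => /andP[_ d0]; rewrite -sum1_card.
  apply: eq_bigl => w; rewrite !inE; case: (eqVneq w 0) => [->|//].
  by rewrite expr0n eq_sym (negbTE d0).
have others_le : (\sum_(d in S | d != c) #|fiber d| <= #|S|.-1 * q.+1)%N.
  apply: (@leq_trans (\sum_(d in S | d != c) q.+1)); first exact: leq_sum.
  rewrite (eq_bigl (mem [predD1 S & c])) => [|d]; last by rewrite !inE andbC.
  by rewrite sum_nat_const (cardD1 c S) inE cq c0.
move: units_sum; rewrite cardsC1 cardL (bigD1 c) ?inE ?cq ?c0 //=.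
move: others_le (fiber_le c) card_Fq_nonzero_le; rewrite -/S.
move: (#|fiber c|) (#|S|) (\sum_(_ | _) _)%N => F s b.
by have := q_gt1; nia.
Qed.

Lemma normq_surj (c : L) : inFq c -> c != 0 -> exists w : L, w ^+ q.+1 = c.
Proof.
move=> cq c0; have := card_normq_fiber cq c0.
case: (set_0Vmem [set w : L | w ^+ q.+1 == c]) => [->|[w]]; first by rewrite cards0.
by rewrite inE => /eqP; exists w.
Qed.

Lemma sqrt_of_inFq (c : L) : inFq c -> c != 0 -> exists2 z : L, z ^+ 2 = c & z ^+ q = c ^+ q./2 * z.
Proof.
move=> cq c0; have [w wc] := normq_surj cq c0.
have q_odd : odd q by rewrite oddX p_odd orbT.
have q_half : q = (q./2).*2.+1 by rewrite -[in LHS](odd_double_half q) q_odd.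
exists (w ^+ (q./2).+1); rewrite -exprM -wc.
  by congr (_ ^+ _); rewrite {2}q_half; lia.
by rewrite -exprM -exprD; congr (_ ^+ _); rewrite q_half; nia.
Qed.

Lemma exprq_sqrt_notin (d : L) : inFq (d ^+ 2) -> ~~ inFq d -> d ^+ q = - d.
Proof.
rewrite /inFq => /eqP d2q /negbTE dq.
have : (d ^+ q) ^+ 2 == d ^+ 2 by rewrite exprAC d2q.
by rewrite eqf_sqr dq => /eqP.
Qed.

Hypothesis q_mod4 : (q %% 4 = 1)%N.

Lemma sqrtN1_inFq : exists2 i : L, inFq i & i ^+ 2 = -1.
Proof.
have [|i i2 iq] := @sqrt_of_inFq (-1) (inFqN inFq1); first by rewrite oppr_eq0 oner_eq0.
exists i => //; rewrite /inFq iq -signr_odd.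
have -> : q./2 = (q %/ 4).*2 by lia.
by rewrite odd_double mul1r.
Qed.

Lemma sqrtN_nonsquare (alpha : L) : inFq alpha ->
  ~ (exists beta : L, inFq beta /\ beta ^+ 2 = alpha) ->
  exists d : L, [/\ d ^+ 2 = - alpha, d ^+ q = - d & ~~ inFq d].
Proof.
move=> aq nonsq; have a0 : alpha != 0.
  by apply/eqP => a0; apply: nonsq; exists 0; rewrite inFq0 a0 expr0n.
have [|d d2 _] := sqrt_of_inFq (inFqN aq); first by rewrite oppr_eq0.
have [i iq i2] := sqrtN1_inFq.
have dq : ~~ inFq d.
  apply/negP => dq; apply: nonsq; exists (i * d).
  by rewrite inFqM // exprMn i2 d2 mulN1r opprK.
by exists d; rewrite exprq_sqrt_notin ?d2 ?inFqN.
Qed.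

Variable th : L.
Hypothesis th_notin : ~~ inFq th.

Lemma coordP (x : L) :
  [/\ inFq (coord_re q th x), inFq (coord_im q th x) & x = coord_re q th x + coord_im q th x * th].
Proof.
have hd : th - th ^+ q != 0 by rewrite subr_eq0 eq_sym.
have h1 : inFq (coord_im q th x).
  rewrite /inFq /coord_im exprMn exprVn !exprpXB // !exprqK.
  by rewrite -[x ^+ _ - x]opprB -[th ^+ _ - th]opprB invrN mulrNN.
split => //; last by rewrite /coord_re subrK.
set c := coord_im q th x in h1 *.
have ex : x ^+ q = x - c * (th - th ^+ q) by rewrite /c divfK // opprB addrC subrK.
rewrite /inFq /coord_re -/c exprpXB // exprMn (eqP h1) ex.
by apply/eqP; ring.
Qed.

Lemma coord_eq0 (a b : L) : inFq a -> inFq b -> a + b * th = 0 -> a = 0 /\ b = 0.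
Proof.
move=> ha hb /eqP; rewrite addrC addr_eq0 => /eqP hab.
have b0 : b = 0.
  apply: contraNeq th_notin => b0.
  by rewrite -(mulKf b0 th) hab inFqM ?inFqV ?inFqN.
by split=> //; move: hab; rewrite b0 mul0r => /eqP; rewrite eq_sym oppr_eq0 => /eqP.
Qed.

Lemma coord_inj (a b a' b' : L) : inFq a -> inFq b -> inFq a' -> inFq b' ->
  a + b * th = a' + b' * th -> a = a' /\ b = b'.
Proof.
move=> ha hb ha' hb' e.
have [] := @coord_eq0 (a - a') (b - b'); rewrite ?inFqB //.
  by rewrite mulrBl addrACA e -opprD subrr.
by move=> /subr0_eq -> /subr0_eq ->.
Qed.

End Subfield.

Create HintDb inFq.
#[local] Hint Resolve inFq0 inFq1 inFqD inFqN inFqB inFqM inFqV inFqX inFq_nat sign_inFq : inFq.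

Lemma expn_mod4_odd_quot p n k : odd p -> (p ^ n %% 4 = 1)%N -> odd (n %/ gcdn k n) ->
  (p ^ k %% 4 = 1)%N.
Proof.
move=> p_odd pn1 kn_odd.
have [p1|p3] : (p %% 4 = 1 \/ p %% 4 = 3)%N by move: (modn2 p); rewrite p_odd; clear; lia.
  by rewrite -modnXm p1 exp1n.
have pow3 m : (3 ^ m %% 4 = if odd m then 3 else 1)%N.
  by elim: m => [//|m IH]; rewrite expnS -modnMmr IH /=; case: (odd m).
move: pn1; rewrite -modnXm p3 pow3 -modnXm p3 pow3.
case n_odd: (odd n) => // _; case k_odd: (odd k) => //.
have g_odd : odd (gcdn k n).
  by move: k_odd; rewrite {1}(divn_eq k (gcdn k n)) (eqP (dvdn_gcdl k n)) addn0 oddM => /andP[].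
by move: n_odd; rewrite {1}(divn_eq n (gcdn k n)) (eqP (dvdn_gcdr k n)) addn0 oddM kn_odd g_odd.
Qed.

Lemma expr_half_sqr (R : pzSemiRingType) e (u : R) : odd e -> (u ^+ e.+1./2) ^+ 2 = u ^+ e.+1.
Proof. by move=> e_odd; rewrite -exprM -[in RHS](odd_double_half e.+1) /= e_odd muln2. Qed.

Section OddQuotient.

Variables (L : finFieldType) (p n k : nat).
Hypotheses (p_prime : prime p) (p_odd : odd p) (charL : p \in [pchar L]).
Hypothesis kn_odd : odd (n %/ gcdn k n).

Local Notation q := (p ^ n)%N.
Local Notation inFq := (inFq q).

Lemma antifixed_eq0 (t : L) : inFq t -> t ^+ (p ^ k) = - t -> t = 0.
Proof.
move=> tq tk.
(* Iterating [t |-> t ^+ (p ^ k)] n / gcd(k, n) times yields both [- t] and [t]. *)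
have iter j : t ^+ (p ^ (k * j)) = (-1) ^+ j * t.
  elim: j => [|j IH]; first by rewrite muln0 expr1 mul1r.
  rewrite mulnS expnD mulnC exprM IH exprMn tk -exprM mulnC exprM exprpXN // expr1n.
  by rewrite exprS mulN1r mulrN mulNr.
have e : (k * (n %/ gcdn k n) = n * (k %/ gcdn k n))%N.
  by rewrite !muln_divA ?dvdn_gcdr ?dvdn_gcdl // mulnC.
have := iter (n %/ gcdn k n)%N; rewrite e expnM inFq_exprqX // -signr_odd kn_odd mulN1r.
move/eqP; rewrite -addr_eq0 -mulr2n -mulr_natr mulf_eq0 (negbTE (two_neq0 p_prime p_odd charL)).
by rewrite orbF => /eqP.
Qed.

Lemma odd_pXk : odd (p ^ k).
Proof. by rewrite oddX p_odd orbT. Qed.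

Lemma expr_half_inj (u v : L) : (q %% 4 = 1)%N -> inFq u -> inFq v ->
  u ^+ (p ^ k).+1./2 = v ^+ (p ^ k).+1./2 -> u = v.
Proof.
move=> q_mod4 uq vq; set m := (p ^ k).+1./2.
have m_odd : odd m.
  have := expn_mod4_odd_quot p_odd q_mod4 kn_odd; rewrite /m.
  by move: (p ^ k)%N => e; clear; lia.
have m_gt0 : (0 < m)%N by case: m m_odd.
have [-> /eqP|v0 uv] := eqVneq v 0.
  by rewrite expr0n eqn0Ngt m_gt0 expf_eq0 m_gt0 => /eqP.
(* [z ^+ (p ^ k) = z^-1] makes [z - z^-1] antifixed, so [z = +-1], and [m] odd excludes [-1]. *)
pose z := u / v.
have zm : z ^+ m = 1 by rewrite exprMn uv exprVn mulfV // expf_neq0.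
have z0 : z != 0 by apply: contra_eq_neq zm => ->; rewrite expr0n eqn0Ngt m_gt0 eq_sym oner_eq0.
have zk : z ^+ (p ^ k) = z^-1.
  apply: (mulIf z0); rewrite mulVf // -exprSr.
  by rewrite -(expr_half_sqr z odd_pXk) -/m zm expr1n.
have zz : z = z^-1.
  apply/eqP; rewrite -subr_eq0; apply/eqP/antifixed_eq0.
    by rewrite inFqB ?inFqV ?inFqM ?inFqV.
  by rewrite exprpXB // zk exprVn zk invrK opprB.
have : (z - 1) * (z + 1) == 0.
  by rewrite -subr_sqr expr2 {2}zz mulfV // expr1n subrr.
rewrite mulf_eq0 subr_eq0 addr_eq0 => /orP[/eqP z1|/eqP zN1].
  by rewrite -(divfK v0 u) -/z z1 mul1r.
move: zm; rewrite zN1 -signr_odd m_odd expr1 => /eqP.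
by rewrite -subr_eq0 -opprD oppr_eq0 -mulr2n (negbTE (two_neq0 p_prime p_odd charL)).
Qed.

Lemma exprpX1_diff (s : L) :
  (s + 1) ^+ (p ^ k + 1) - (s - 1) ^+ (p ^ k + 1) = 2%:R * (s + s ^+ (p ^ k)).
Proof. by rewrite !exprD !expr1 exprpXD // exprpXB // expr1n; ring. Qed.

Lemma exprpX1_flat (s : L) : inFq s ->
  (s + 1) ^+ (p ^ k + 1) = (s - 1) ^+ (p ^ k + 1) -> s = 0.
Proof.
move=> sq /eqP; rewrite -subr_eq0 exprpX1_diff mulf_eq0 (negbTE (two_neq0 p_prime p_odd charL)).
by rewrite addr_eq0 => /eqP sk; apply: antifixed_eq0; rewrite // {2}sk opprK.
Qed.

Variable i : nat.

Lemma exprpXi_twist (t : L) : t ^+ (p ^ (k + i) + p ^ i) = (t ^+ (p ^ i)) ^+ (p ^ k + 1).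
Proof. by rewrite -exprM mulnDr muln1 -expnD [(i + k)%N]addnC. Qed.

Lemma exprpXi_flat (t : L) : inFq t ->
  (t + 1) ^+ (p ^ (k + i) + p ^ i) = (t - 1) ^+ (p ^ (k + i) + p ^ i) -> t = 0.
Proof.
move=> tq; rewrite !exprpXi_twist exprpXD // exprpXB // expr1n => /exprpX1_flat.
by rewrite inFqX // => /(_ isT) /eqP; rewrite expf_eq0 => /andP[_ /eqP].
Qed.

Lemma exprpX_cross_eq0 (alpha x : L) : inFq alpha ->
  ~ (exists beta : L, inFq beta /\ beta ^+ 2 = alpha) -> inFq x ->
  (x + 1) ^+ (p ^ k + 1) - (x - 1) ^+ (p ^ k + 1) =
    alpha * ((x + 1) ^+ (p ^ (k + i) + p ^ i) - (x - 1) ^+ (p ^ (k + i) + p ^ i)) -> x = 0.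
Proof.
move=> aq nonsq xq; rewrite !exprpXi_twist exprpXD // exprpXB // expr1n !exprpX1_diff.
rewrite -exprM mulnC exprM -exprpXD // => e; set w := x + x ^+ (p ^ k) in e.
(* [w = alpha w ^+ (p ^ i)] would make [alpha] a square in F_q unless [w = 0]. *)
have w_alpha : w = alpha * w ^+ (p ^ i).
  by apply: (mulfI (two_neq0 p_prime p_odd charL)); rewrite e; ring.
have w0 : w = 0.
  apply/eqP; apply/negPn/negP => w0; apply: nonsq.
  have wi0 : w ^+ (p ^ i) != 0 by rewrite expf_neq0.
  exists (w ^+ (p ^ i).+1./2 / w ^+ (p ^ i)); split.
    by rewrite inFqM ?inFqV ?inFqX ?inFqD ?inFqX.
  by rewrite expr_div_n expr_half_sqr ?oddX ?p_odd ?orbT // exprS {1}w_alpha; field.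
by apply: antifixed_eq0 => //; apply/eqP; rewrite -addr_eq0 addrC -/w w0.
Qed.

End OddQuotient.

Definition line_trace (L : finFieldType) (q : nat) (f : L -> L) (xi a b : L) : {set L} :=
  [set x | [exists t, inFq q t && (f (x + a) - b == t * xi)]].

Lemma card_unital_line (L : finFieldType) q (f : L -> L) (xi a b : L) :
  #|U_xi q xi :&: line_set f (inl (inl (a, b)))| = #|line_trace q f xi a b|.
Proof.
have graph_inj : injective (fun x : L => inl (x, f (x + a) - b) : point L) by move=> x y [].
rewrite -(card_imset _ graph_inj); apply: eq_card => -[[x y]|o]; rewrite !inE /=.
  apply/andP/imsetP => [[xU /eqP yx]|[x' + [ex ey]]].
    by exists x; rewrite ?inE -?yx.
  by rewrite inE ex ey => ->.
by apply/andP/imsetP => [[/eqP ->]|[]].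
Qed.

Lemma unital_lineI (L : finFieldType) q (f : L -> L) (xi a b a' b' x t : L) : inFq q t ->
  (forall z, f (z + a) - b = f (z + a') - b' -> z = x) ->
  f (x + a) - b = t * xi -> f (x + a') - b' = t * xi ->
  (U_xi q xi :&: line_set f (inl (inl (a, b)))) :&: (U_xi q xi :&: line_set f (inl (inl (a', b'))))
  = [set inl (x, t * xi)].
Proof.
move=> tq x_uniq xt xt'; apply/setP => -[[z y]|o]; rewrite !inE /=; last by case: o.
apply/idP/eqP => [/and3P[/andP[_ /eqP yz] _ /eqP yz']|[-> ->]].
  by have zx := x_uniq z (etrans (esym yz) yz'); rewrite yz zx xt.
have tU : [exists t0, inFq q t0 && (t * xi == t0 * xi)] by apply/existsP; exists t; rewrite tq eqxx.
by rewrite xt xt' eqxx !andbT tU.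
Qed.

Lemma uniq_ONan_points (L : finFieldType) (u v y : L) :
  2%:R != 0 :> L -> u != 0 -> v != 0 -> y != 0 -> u != v -> u != - v ->
  uniq [:: inl (0, y); inl (- u, 0); inl (- v, 0); inl (v, 0); inl (u, 0); inl (0, - y) : point L].
Proof.
move=> two0 /negbTE u0 /negbTE v0 /negbTE y0 /negbTE uv /negbTE uNv.
have eqNr (x : L) : (x == - x) = (x == 0).
  by rewrite -addr_eq0 -mulr2n -mulr_natl mulf_eq0 (negbTE two0).
rewrite /= !inE !(inj_eq inl_inj) !xpair_eqE !eqxx !andbT !andTb.
rewrite (eq_sym 0 (- y)) !oppr_eq0 y0 !andbF eqNr y0 !orbF.
rewrite eqr_opp [- u == v]eqr_oppLR (eq_sym (- u)) (eq_sym (- v) v) (eq_sym (- v) u) !eqNr.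
by rewrite (eq_sym v u) uv uNv u0 v0.
Qed.

Section ONanConfiguration.

Variables (L : finFieldType) (p n k i : nat) (xi alpha : L) (f : L -> L).
Hypotheses (p_prime : prime p) (p_odd : odd p) (charL : p \in [pchar L]).
Hypotheses (n_gt0 : (0 < n)%N) (cardL : #|L| = ((p ^ n) ^ 2)%N) (q_mod4 : (p ^ n %% 4 = 1)%N).
Hypothesis kn_odd : odd (n %/ gcdn k n).

Local Notation q := (p ^ n)%N.
Local Notation inFq := (inFq q).
Local Notation N0 x0 x1 := (x0 ^+ (p ^ k + 1) + alpha * x1 ^+ (p ^ (k + i) + p ^ i)).

Hypotheses (xi_notin : ~~ inFq xi) (alpha_in : inFq alpha).
Hypothesis alpha_nonsq : ~ (exists beta : L, inFq beta /\ beta ^+ 2 = alpha).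
Hypothesis f_coord : forall x0 x1 : L, inFq x0 -> inFq x1 ->
  f (x0 + x1 * xi) = N0 x0 x1 + 2%:R * x0 * x1 * xi.

Let e1_even : ~~ odd (p ^ k + 1).
Proof. by rewrite addn1 /= oddX p_odd orbT. Qed.

Let e2_even : ~~ odd (p ^ (k + i) + p ^ i).
Proof. by rewrite oddD !oddX p_odd !orbT. Qed.

Lemma alpha_neq0 : alpha != 0.
Proof. by apply/eqP => a0; apply: alpha_nonsq; exists 0; rewrite inFq0 // a0 expr0n. Qed.

Lemma f_coordB (x0 x1 b0 b1 : L) : inFq x0 -> inFq x1 ->
  f (x0 + x1 * xi) - (b0 + b1 * xi) = (N0 x0 x1 - b0) + (2%:R * x0 * x1 - b1) * xi.
Proof. by move=> x0q x1q; rewrite f_coord //; ring. Qed.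

Lemma mem_line_trace (a b0 b1 x : L) : inFq b0 -> inFq b1 ->
  (x \in line_trace q f xi a (b0 + b1 * xi)) =
  (N0 (coord_re q xi (x + a)) (coord_im q xi (x + a)) == b0).
Proof.
move=> b0q b1q; set x0 := coord_re q xi (x + a); set x1 := coord_im q xi (x + a).
have [x0q x1q xa] := coordP p_prime charL cardL xi_notin (x + a).
rewrite inE xa -[_ == b0]subr_eq0 f_coordB //.
apply/existsP/eqP => [[t /andP[tq /eqP]]|N0b0].
  move/eqP; rewrite -subr_eq0 -addrA -mulrBl => /eqP.
  by case/(coord_eq0 p_prime charL xi_notin); auto 10 with inFq.
exists (2%:R * x0 * x1 - b1); rewrite N0b0 add0r eqxx andbT.
auto 10 with inFq.
Qed.

Lemma card_line_trace (a b0 b1 : L) : inFq b0 -> b0 != 0 -> inFq b1 ->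
  #|line_trace q f xi a (b0 + b1 * xi)| = q.+1.
Proof.
move=> b0q b0_neq0 b1q.
have [d [d2 dq dnotin]] :=
  sqrtN_nonsquare p_prime p_odd charL n_gt0 cardL q_mod4 alpha_in alpha_nonsq.
pose u0 x := coord_re q xi (x + a); pose u1 x := coord_im q xi (x + a).
have coord x := coordP p_prime charL cardL xi_notin (x + a).
have pk_odd := odd_pXk k p_odd.
(* The norm of [Phi x] is the F_q-part of [f (x + a)], and [Phi] is injective
   because [(p ^ k + 1) / 2] is odd. *)
pose Phi x := u0 x ^+ (p ^ k).+1./2 + (u1 x ^+ (p ^ i)) ^+ (p ^ k).+1./2 * d.
have Phi_norm x : Phi x ^+ q.+1 = N0 (u0 x) (u1 x).
  have [u0q u1q _] := coord x.
  rewrite normq_coord //; try by auto with inFq.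
  by rewrite d2 !expr_half_sqr // exprpXi_twist addn1; ring.
have Phi_inj : injective Phi.
  move=> y z; have [y0q y1q ey] := coord y; have [z0q z1q ez] := coord z.
  case/(coord_inj p_prime charL dnotin); try by auto with inFq.
  move=> e0 e1.
  have {}e0 := expr_half_inj p_prime p_odd charL kn_odd q_mod4 y0q z0q e0.
  have {}e1 := expr_half_inj p_prime p_odd charL kn_odd q_mod4 (inFqX _ y1q) (inFqX _ z1q) e1.
  by apply: (addIr a); rewrite ey ez e0 (exprpX_inj p_prime charL e1).
have -> : line_trace q f xi a (b0 + b1 * xi) = Phi @^-1: [set w | w ^+ q.+1 == b0].
  by apply/setP => x; rewrite mem_line_trace // !inE Phi_norm.
by rewrite card_preimset // card_normq_fiber.
Qed.

(* [1 + alpha] is the F_q-part of [f (s0 + s1 xi)] for [s0, s1 = +-1] and is nonzero,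
   so each such line is a block. *)
Definition sign_block (s0 s1 : L) : {set point L} :=
  U_xi q xi :&: line_set f (inl (inl (s0 + s1 * xi, 1 + alpha - 2%:R * s0 * s1 * xi))).

Lemma one_add_alpha_neq0 : 1 + alpha != 0.
Proof.
have [j jq j2] := sqrtN1_inFq p_prime p_odd charL n_gt0 cardL q_mod4.
apply/eqP => /eqP; rewrite addr_eq0 => /eqP a1; apply: alpha_nonsq.
by exists j; rewrite j2 a1 opprK.
Qed.

Lemma sign_block_is_block (s0 s1 : L) : inFq s0 -> inFq s1 ->
  is_block f q (U_xi q xi) (sign_block s0 s1).
Proof.
move=> s0q s1q; exists (inl (inl (s0 + s1 * xi, 1 + alpha - 2%:R * s0 * s1 * xi))).
split=> //; rewrite card_unital_line.
have -> : 1 + alpha - 2%:R * s0 * s1 * xi = (1 + alpha) + (- (2%:R * s0 * s1)) * xi by ring.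
by rewrite card_line_trace ?one_add_alpha_neq0; auto 10 with inFq.
Qed.

Lemma f_sign (s0 s1 : L) : s0 ^+ 2 = 1 -> s1 ^+ 2 = 1 ->
  f (s0 + s1 * xi) = 1 + alpha + 2%:R * s0 * s1 * xi.
Proof.
move=> s02 s12; rewrite f_coord; try by auto with inFq.
by rewrite -[s0]mulr1 -[s1]mulr1 !expr_sign_even ?expr1n ?mulr1.
Qed.

Lemma sign_line_coord (s0 s1 z0 z1 : L) : inFq s0 -> inFq s1 -> inFq z0 -> inFq z1 ->
  f ((z0 + z1 * xi) + (s0 + s1 * xi)) - (1 + alpha - 2%:R * s0 * s1 * xi) =
  (N0 (z0 + s0) (z1 + s1) - (1 + alpha)) + 2%:R * ((z0 + s0) * (z1 + s1) + s0 * s1) * xi.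
Proof.
move=> s0q s1q z0q z1q.
have -> : (z0 + z1 * xi) + (s0 + s1 * xi) = (z0 + s0) + (z1 + s1) * xi by ring.
by rewrite f_coord; [ring | auto with inFq..].
Qed.

Lemma sign_blockI (s0 s1 s0' s1' x t : L) :
  s0 ^+ 2 = 1 -> s1 ^+ 2 = 1 -> s0' ^+ 2 = 1 -> s1' ^+ 2 = 1 -> inFq t ->
  (forall z0 z1, inFq z0 -> inFq z1 ->
    N0 (z0 + s0) (z1 + s1) = N0 (z0 + s0') (z1 + s1') ->
    (z0 + s0) * (z1 + s1) + s0 * s1 = (z0 + s0') * (z1 + s1') + s0' * s1' ->
    z0 + z1 * xi = x) ->
  f (x + (s0 + s1 * xi)) - (1 + alpha - 2%:R * s0 * s1 * xi) = t * xi ->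
  f (x + (s0' + s1' * xi)) - (1 + alpha - 2%:R * s0' * s1' * xi) = t * xi ->
  sign_block s0 s1 :&: sign_block s0' s1' = [set inl (x, t * xi)].
Proof.
move=> s02 s12 s02' s12' tq x_uniq xt xt'; apply: unital_lineI => // z.
have [z0q z1q ->] := coordP p_prime charL cardL xi_notin z.
move: (coord_re _ _ _) (coord_im _ _ _) z0q z1q => z0 z1 z0q z1q.
rewrite !sign_line_coord; try by auto with inFq.
case/(coord_inj p_prime charL xi_notin); try by auto 10 with inFq.
move=> /addIr eR /(mulfI (two_neq0 p_prime p_odd charL)) eI.
exact: x_uniq.
Qed.

Lemma sign_blockI_flip1 (s0 s1 : L) : s0 ^+ 2 = 1 -> s1 ^+ 2 = 1 ->
  sign_block s0 s1 :&: sign_block s0 (- s1) = [set inl (- 2%:R * s0, 0)].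
Proof.
move=> s02 s12; rewrite -(mul0r xi); apply: sign_blockI; rewrite ?sqrrN //; try by auto with inFq.
- move=> z0 z1 z0q z1q /addrI /(mulfI alpha_neq0) eR eI.
  have z1_0 : z1 = 0.
    move: eR; rewrite exprD_sign // exprB_sign //.
    move=> /(exprpXi_flat p_prime p_odd charL kn_odd (inFqM (sign_inFq n p_prime charL s12) z1q)).
    by move/eqP; rewrite mulf_eq0 (negbTE (sign_neq0 s12)) => /eqP.
  apply/subr0_eq/(@eq0_of_scaled _ (2%:R * s1) _ _ _ _ eI); last by rewrite z1_0; ring.
  by rewrite mulf_neq0 ?(two_neq0 p_prime p_odd charL) // sign_neq0.
- have -> : - 2%:R * s0 + (s0 + s1 * xi) = - s0 + s1 * xi by ring.
  by rewrite f_sign ?sqrrN //; ring.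
have -> : - 2%:R * s0 + (s0 + - s1 * xi) = - s0 + - s1 * xi by ring.
by rewrite f_sign ?sqrrN //; ring.
Qed.

Lemma sign_blockI_flip0 (s0 s1 : L) : s0 ^+ 2 = 1 -> s1 ^+ 2 = 1 ->
  sign_block s0 s1 :&: sign_block (- s0) s1 = [set inl (- 2%:R * s1 * xi, 0)].
Proof.
move=> s02 s12; rewrite -(mul0r xi); apply: sign_blockI; rewrite ?sqrrN //; try by auto with inFq.
- move=> z0 z1 z0q z1q /addIr eR eI.
  have z0_0 : z0 = 0.
    move: eR; rewrite exprD_sign // exprB_sign //.
    move=> /(exprpX1_flat p_prime p_odd charL kn_odd (inFqM (sign_inFq n p_prime charL s02) z0q)).
    by move/eqP; rewrite mulf_eq0 (negbTE (sign_neq0 s02)) => /eqP.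
  have z1_2 : z1 = - 2%:R * s1.
    apply/subr0_eq/(@eq0_of_scaled _ (2%:R * s0) _ _ _ _ eI); last by rewrite z0_0; ring.
    by rewrite mulf_neq0 ?(two_neq0 p_prime p_odd charL) // sign_neq0.
  by rewrite z0_0 z1_2 add0r.
- have -> : - 2%:R * s1 * xi + (s0 + s1 * xi) = s0 + - s1 * xi by ring.
  by rewrite f_sign ?sqrrN //; ring.
have -> : - 2%:R * s1 * xi + (- s0 + s1 * xi) = - s0 + - s1 * xi by ring.
by rewrite f_sign ?sqrrN //; ring.
Qed.

Lemma sign_blockI_opp (s0 s1 : L) : s0 ^+ 2 = 1 -> s1 ^+ 2 = 1 ->
  sign_block s0 s1 :&: sign_block (- s0) (- s1) = [set inl (0, 4%:R * s0 * s1 * xi)].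
Proof.
move=> s02 s12; apply: sign_blockI; rewrite ?sqrrN //; try by auto 10 with inFq.
- move=> z0 z1 z0q z1q eR eI; set u := s0 * z0.
  have lin : s1 * z0 + s0 * z1 = 0.
    by apply: (@eq0_of_scaled _ 2%:R _ _ _ (two_neq0 p_prime p_odd charL) eI); ring.
  have z1E : z1 = - (s1 * u).
    have s0z1 : s0 * z1 = - (s1 * z0) by apply/eqP; rewrite -addr_eq0 addrC lin.
    by rewrite -[z1]mul1r -s02 expr2 -mulrA s0z1 /u; ring.
  have s1z1 : s1 * z1 = - u by rewrite z1E mulrN mulrA -expr2 s12 mul1r.
  have u0 : u = 0.
    apply: (exprpX_cross_eq0 (i := i) p_prime p_odd charL kn_odd alpha_in alpha_nonsq).
      by apply: inFqM => //; apply: sign_inFq s02.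
    move: eR; rewrite (exprD_sign z0 s02) // (exprB_sign z0 s02) // (exprD_sign z1 s12) //.
    rewrite (exprB_sign z1 s12) // -/u s1z1.
    have -> : - u + 1 = -1 * (u - 1) by ring.
    have -> : - u - 1 = -1 * (u + 1) by ring.
    rewrite !expr_sign_even ?sqrrN ?expr1n // => /(canRL (addrK _)) ->; ring.
  have z0_0 : z0 = 0 by move: u0 => /eqP; rewrite mulf_eq0 (negbTE (sign_neq0 s02)) => /eqP.
  by rewrite z1E u0 z0_0 mulr0 oppr0 mul0r addr0.
- by rewrite add0r f_sign //; ring.
by rewrite add0r f_sign ?sqrrN //; ring.
Qed.

Theorem unital_has_ONan : has_ONan f q (U_xi q xi).
Proof.
have sq1 : (1 : L) ^+ 2 = 1 by rewrite expr1n.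
have sqN1 : (-1 : L) ^+ 2 = 1 by rewrite sqrrN expr1n.
have two0 := two_neq0 p_prime p_odd charL.
have xi_neq x : inFq x -> xi != x by move=> xq; apply: contraNneq xi_notin => ->.
exists (sign_block 1 1), (sign_block (-1) (-1)), (sign_block 1 (-1)), (sign_block (-1) 1).
exists (inl (0, 4%:R * xi)), (inl (- 2%:R, 0)), (inl (- (2%:R * xi), 0)),
  (inl (2%:R * xi, 0)), (inl (2%:R, 0)), (inl (0, - (4%:R * xi))).
split; first by split; apply: sign_block_is_block; auto with inFq.
split; first by rewrite sign_blockI_opp // sign_blockI_flip1 // sign_blockI_flip0 // !mulr1 mulNr.
split.
  have := sign_blockI_flip0 sqN1 sqN1; have := sign_blockI_flip1 sqN1 sqN1.
  have := sign_blockI_opp sq1 sqN1; rewrite !opprK mulr1 !mulrN1 !opprK mulNr.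
  by move=> -> -> ->.
apply: uniq_ONan_points => //.
- by rewrite mulf_neq0 // xi_neq; auto with inFq.
- by rewrite mulf_neq0 ?[4%:R](natrM _ 2 2) ?mulf_neq0 ?xi_neq //; auto with inFq.
- by rewrite -[X in X != _]mulr1 (inj_eq (mulfI two0)) eq_sym xi_neq; auto with inFq.
by rewrite -mulrN -[X in X != _]mulr1 (inj_eq (mulfI two0)) eq_sym eqr_oppLR xi_neq; auto with inFq.
Qed.

End ONanConfiguration.

Theorem theorem3p15 (p n : nat) (L : finFieldType) (xi alpha : L) (f : L -> L) :
  prime p -> odd p -> (0 < n)%N ->
  #|L| = ((p ^ n) ^ 2)%N ->
  ((p ^ n) %% 4 = 1)%N ->
  ~~ inFq (p ^ n) xi ->
  inFq (p ^ n) alpha ->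
  ~ (exists beta : L, inFq (p ^ n) beta /\ beta ^+ 2 = alpha) ->
  ((exists i : nat, (0 < i < n)%N /\
      forall x0 x1 : L, inFq (p ^ n) x0 -> inFq (p ^ n) x1 ->
        f (x0 + x1 * xi) =
          (x0 ^+ 2 + alpha * x1 ^+ (2 * p ^ i)) + 2%:R * x0 * x1 * xi)
   \/
   (exists i k : nat, (0 < i < n)%N /\ (0 < k < n)%N /\ odd (n %/ gcdn k n) /\
      forall x0 x1 : L, inFq (p ^ n) x0 -> inFq (p ^ n) x1 ->
        f (x0 + x1 * xi) =
          (x0 ^+ (p ^ k + 1) + alpha * x1 ^+ (p ^ (k + i) + p ^ i))
          + 2%:R * x0 * x1 * xi)) ->
  (exists omega : L, inFq (p ^ n) omega /\ omega ^+ 2 - omega + 1 = 0) ->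
  has_ONan f (p ^ n) (U_xi (p ^ n) xi).
Proof.
move=> p_prime p_odd n_gt0 cardL q_mod4 xi_notin alpha_in alpha_nonsq f_family _.
have charL : p \in [pchar L] by apply: (card_finPcharP (n := n * 2)); rewrite // cardL expnM.
have [i [k [kn_odd f_coord]]] : exists i k, odd (n %/ gcdn k n) /\
    forall x0 x1 : L, inFq (p ^ n) x0 -> inFq (p ^ n) x1 ->
      f (x0 + x1 * xi) = (x0 ^+ (p ^ k + 1) + alpha * x1 ^+ (p ^ (k + i) + p ^ i))
        + 2%:R * x0 * x1 * xi.
  case: f_family => [[i [_ f_coord]]|[i [k [_ [_ ?]]]]]; last by exists i, k.
  exists i, 0%N; split=> [|x0 x1 x0q x1q]; first by rewrite gcd0n divnn n_gt0.
  by rewrite f_coord // add0n addnn -mul2n.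
exact: unital_has_ONan p_prime p_odd charL n_gt0 cardL q_mod4 kn_odd xi_notin alpha_in
  alpha_nonsq f_coord.
Qed.
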